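(* Let $\mathcal{D}$ be a DCR graph and suppose $\mathbf{1}\triangleright P_0\xrightarrow{\tau}P_1\xrightarrow{\tau}\cdots\xrightarrow{\tau}P_n$ with $P_0=\textsc{dcrpsi}(\mathcal{D})$. Then the generation component (fourth component) of the frame $\mathcal{F}(P_n)$ is $s^n(0)$, i.e. equals $n$.
   Context: A DCR graph is a tuple $(E,M,\to\!\bullet,\bullet\!\to,\to\!\diamond,\to\!+,\to\!\%)$ where $E$ is a set of events (names from a nominal set), $M=(Ex',Re',In')$ is a triple of subsets of $E$ (the marking), and $\to\!\bullet,\bullet\!\to,\to\!\diamond,\to\!+,\to\!\%\subseteq E\times E$ are the condition, response, milestone, include and exclude relations. For a relation $\to$ write $e\!\to=\{f\mid e\to f\}$ and $\to\! e=\{f\mid f\to e\}$. dcrPsi instance: assertions are quadruples $(Ex,Re,In,G)$ with $Ex,Re,In\subseteq E$ and $G$ a natural number built from $0$ and successor $s(\cdot)$ (the generation); terms are a distinguished channel name $m$ and assertions; conditions are triples $(Co,Mi,e)$ with $Co,Mi\subseteq E$, $e\in E$; channel equality is $=$; unit $\mathbf{1}=(\emptyset,\emptyset,\emptyset,0)$; composition: $(Ex,Re,In,G)\otimes(Ex',Re',In',G')$ equals the first argument if $G>G'$, the second if $G<G'$, and $(Ex\cup Ex',Re\cup Re',In\cup In',G)$ if $G=G'$; entailment: $(Ex,Re,In,G)\vdash(Co,Mi,e)$ iff $e\in In$, $In\cap Co\subseteq Ex$ and $In\cap Mi\cap Re=\emptyset$. Psi-calculus: processes $\mathbf{0}$,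 $(\!|\Psi|\!)$, $\overline{M}\langle N\rangle.P$, $\underline{M}(\lambda\tilde x)N.P$, $\mathbf{case}\ \tilde\varphi:\tilde P$, $P\mid Q$, $!P$. Frames: $\mathcal{F}((\!|\Psi|\!))=\Psi$, $\mathcal{F}(P\mid Q)=\mathcal{F}(P)\otimes\mathcal{F}(Q)$, frame of $\mathbf{0}$, prefixed, case and replicated processes is $\mathbf{1}$. Transitions $\Psi\triangleright P\xrightarrow{\alpha}P'$ are generated by: (Out) if $\Psi\vdash M\leftrightarrow K$ then $\Psi\triangleright\overline{M}\langle N\rangle.P\xrightarrow{\overline{K}N}P$; (In) if $\Psi\vdash M\leftrightarrow K$ then $\Psi\triangleright\underline{M}(\lambda\tilde y)N.P\xrightarrow{\underline{K}N[\tilde y:=\tilde L]}P[\tilde y:=\tilde L]$ for any terms $\tilde L$; (Case) if $\Psi\triangleright P_i\xrightarrow{\alpha}P'$ and $\Psi\vdash\varphi_i$ then $\Psi\triangleright\mathbf{case}\ \tilde\varphi:\tilde P\xrightarrow{\alpha}P'$; (Par) if $\Psi\otimes\mathcal{F}(Q)\triangleright P\xrightarrow{\alpha}P'$ then $\Psi\triangleright P\mid Q\xrightarrow{\alpha}P'\mid Q$, and symmetrically; (Rep) if $\Psi\triangleright P\mid !P\xrightarrow{\alpha}P'$ then $\Psi\triangleright !P\xrightarrow{\alpha}P'$; (Com) if $\mathcal{F}(P)=\Psi_P$, $\mathcal{F}(Q)=\Psi_Q$, $\Psi_Q\otimes\Psi\triangleright P\xrightarrow{\overline{M}N}P'$,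 $\Psi_P\otimes\Psi\triangleright Q\xrightarrow{\underline{K}N}Q'$ and $\Psi_Q\otimes\Psi_P\otimes\Psi\vdash M\leftrightarrow K$, then $\Psi\triangleright P\mid Q\xrightarrow{\tau}P'\mid Q'$, and symmetrically. Assertion processes and $\mathbf{0}$ have no transitions. Set-expressions in terms are identified with their values after substitution. Translation: $\textsc{dcrpsi}(\mathcal{D})=P_s\mid\big|_{e\in E}P_e$ with $P_s=(\!|(Ex',Re',In',0)|\!)\mid\overline{m}\langle(Ex',Re',In',0)\rangle.\mathbf{0}$ and $P_e=!\big(\mathbf{case}\ \varphi_e:\underline{m}(\lambda X_E,X_R,X_I,X_G)(X_E,X_R,X_I,X_G).(\overline{m}\langle U_e\rangle.\mathbf{0}\mid(\!|U_e|\!))\big)$, where $U_e=(X_E\cup\{e\},(X_R\setminus\{e\})\cup e\!\bullet\!\!\to,(X_I\setminus e\!\to\!\%)\cup e\!\to\!+,s(X_G))$ and $\varphi_e=(\to\!\bullet e,\to\!\diamond e,e)$. *)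

From mathcomp Require Import all_boot.
Set Implicit Arguments.
Unset Strict Implicit.
Unset Printing Implicit Defensive.

Section DcrPsi.
Variable E : finType.

Record dcr_graph := DCR {
  mEx : {set E}; mRe : {set E}; mIn : {set E};
  rcond : rel E;
  rresp : rel E;
  rmile : rel E;
  rincl : rel E;
  rexcl : rel E
}.

Definition post (r : rel E) (e : E) : {set E} := [set f | r e f].
Definition pre  (r : rel E) (e : E) : {set E} := [set f | r f e].

Record assertion := Asn { aEx : {set E}; aRe : {set E}; aIn : {set E}; aG : nat }.

Definition unitA : assertion := Asn set0 set0 set0 0.

Definition compA (a b : assertion) : assertion :=
  if aG b < aG a then a
  else if aG a < aG b then b
  else Asn (aEx a :|: aEx b) (aRe a :|: aRe b) (aIn a :|: aIn b) (aG a).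

Inductive term := Chan | Ast of assertion.

Record cond := Cond { cCo : {set E}; cMi : {set E}; cev : E }.

Definition entails (a : assertion) (c : cond) : Prop :=
  cev c \in aIn a /\ aIn a :&: cCo c \subset aEx a /\ aIn a :&: cMi c :&: aRe a = set0.

Definition chan_eq (a : assertion) (M K : term) : Prop := M = K.

(* The input prefix
   M(\lambda X_E,X_R,X_I,X_G) N . P is represented in higher-order
   abstract syntax: the function yields, for values of the bound
   variables, the pair (N, P) after substitution. *)
Inductive proc :=
| Nil
| Ass of assertion
| Out of term & term & proc
| Inp of term & ({set E} -> {set E} -> {set E} -> nat -> (term * proc))
| Case of list (cond * proc)
| Par of proc & proc
| Rep of proc.

Fixpoint frame (P : proc) : assertion :=
  match P with
  | Ass a => a
  | Par P Q => compA (frame P) (frame Q)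
  | _ => unitA
  end.

Inductive label := LOut of term & term | LIn of term & term | Tau.

Inductive trans : assertion -> proc -> label -> proc -> Prop :=
| tOut Psi M K N P :
    chan_eq Psi M K -> trans Psi (Out M N P) (LOut K N) P
| tIn Psi M K f XE XR XI XG :
    chan_eq Psi M K ->
    trans Psi (Inp M f) (LIn K (f XE XR XI XG).1) (f XE XR XI XG).2
| tCase Psi cs phi P a P' :
    (exists i, i < size cs /\ nth (phi, P) cs i = (phi, P)) -> trans Psi P a P' -> entails Psi phi ->
    trans Psi (Case cs) a P'
| tParL Psi P Q a P' :
    trans (compA Psi (frame Q)) P a P' -> trans Psi (Par P Q) a (Par P' Q)
| tParR Psi P Q a Q' :
    trans (compA Psi (frame P)) Q a Q' -> trans Psi (Par P Q) a (Par P Q')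
| tRep Psi P a P' :
    trans Psi (Par P (Rep P)) a P' -> trans Psi (Rep P) a P'
| tComL Psi P Q M K N P' Q' :
    trans (compA (frame Q) Psi) P (LOut M N) P' ->
    trans (compA (frame P) Psi) Q (LIn K N) Q' ->
    chan_eq (compA (compA (frame Q) (frame P)) Psi) M K ->
    trans Psi (Par P Q) Tau (Par P' Q')
| tComR Psi P Q M K N P' Q' :
    trans (compA (frame Q) Psi) P (LIn K N) P' ->
    trans (compA (frame P) Psi) Q (LOut M N) Q' ->
    chan_eq (compA (compA (frame Q) (frame P)) Psi) M K ->
    trans Psi (Par P Q) Tau (Par P' Q').

Fixpoint bigpar (s : list proc) : proc :=
  match s with
  | nil => Nil
  | P :: nil => P
  | P :: s' => Par P (bigpar s')
  end.

Section Translation.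
Variable D : dcr_graph.

Definition U_e (e : E) (XE XR XI : {set E}) (XG : nat) : assertion :=
  Asn (XE :|: [set e])
      ((XR :\ e) :|: post (rresp D) e)
      ((XI :\: post (rexcl D) e) :|: post (rincl D) e)
      XG.+1.

Definition phi_e (e : E) : cond := Cond (pre (rcond D) e) (pre (rmile D) e) e.

Definition P_s : proc :=
  Par (Ass (Asn (mEx D) (mRe D) (mIn D) 0))
      (Out Chan (Ast (Asn (mEx D) (mRe D) (mIn D) 0)) Nil).

Definition P_e (e : E) : proc :=
  Rep (Case ((phi_e e,
              Inp Chan (fun XE XR XI XG =>
                 (Ast (Asn XE XR XI XG),
                  Par (Out Chan (Ast (U_e e XE XR XI XG)) Nil)
                      (Ass (U_e e XE XR XI XG))))) :: nil)).

Definition dcrpsi : proc := Par P_s (bigpar (map P_e (enum E))).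
End Translation.
End DcrPsi.

From Pilot Require Import Defs.
From mathcomp Require Import all_boot.

Set Implicit Arguments.
Unset Strict Implicit.
Unset Printing Implicit Defensive.

(* The translation behaves as a token ring on the channel [m]: at every
   point of a run exactly one output on [m] is pending, and it carries the
   current generation.  A τ-step consumes that output by one of the
   replicated event processes, which emits a new output and a new assertion
   of generation one higher.  Composition of assertions keeps the one of
   largest generation, so the generation of the frame is the maximum of the
   generations ever asserted, and thus equals the number of τ-steps. *)

Section GenerationCount.
Variable E : finType.
Variable D : dcr_graph E.

Lemma aG_compA (a b : assertion E) : aG (Defs.compA a b) = maxn (aG a) (aG b).
Proof. by rewrite /Defs.compA; case: ltngtP. Qed.

Definition update_body (e : E) XE XR XI XG : term E * proc E :=
  (Ast (Asn XE XR XI XG),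
   Par (Out (Chan E) (Ast (U_e D e XE XR XI XG)) (Defs.Nil E))
       (Ass (U_e D e XE XR XI XG))).

Definition guarded_update (e : E) : proc E :=
  Case [:: (phi_e D e, Inp (Chan E) (update_body e))].

Fixpoint wf_proc (P : proc E) : Prop :=
  match P with
  | Defs.Nil | Ass _ => True
  | Out _ N R => (exists a, N = Ast a) /\ R = Defs.Nil E
  | Inp _ f => exists e, f = update_body e
  | Case cs => exists e, Case cs = guarded_update e
  | Par P Q => wf_proc P /\ wf_proc Q
  | Rep B => exists e, B = guarded_update e
  end.

Fixpoint pending (P : proc E) : seq nat :=
  match P with
  | Out _ (Ast a) _ => [:: aG a]
  | Par P Q => pending P ++ pending Q
  | _ => [::]
  end.

(* A step is summarised by its effect on the multiset [s] of generations of
   pending outputs and on the generation [g] of the frame. *)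
Definition step_effect (l : label E) (s : seq nat) (g : nat)
    (s' : seq nat) (g' : nat) : Prop :=
  match l with
  | LOut _ N => exists a, N = Ast a /\ perm_eq s (aG a :: s') /\ g' = g
  | LIn _ N => exists XE XR XI XG, N = Ast (Asn XE XR XI XG) /\
      perm_eq s' (XG.+1 :: s) /\ g' = maxn g XG.+1
  | Tau => exists k t, perm_eq s (k :: t) /\ perm_eq s' (k.+1 :: t) /\
      g' = maxn g k.+1
  end.

Lemma step_effect_catr t h l s g s' g' :
  step_effect l s g s' g' ->
  step_effect l (s ++ t) (maxn g h) (s' ++ t) (maxn g' h).
Proof.
case: l => [M N|K N|] /=.
- case=> a [-> [ps ->]]; exists a; split=> //; split=> //.
  by rewrite -cat_cons perm_cat2r.
- case=> XE [XR [XI [XG [-> [ps ->]]]]]; exists XE, XR, XI, XG.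
  split=> //; split; first by rewrite -cat_cons perm_cat2r.
  by rewrite -!maxnA [maxn h _]maxnC.
- case=> k [t' [ps [ps' ->]]]; exists k, (t' ++ t).
  rewrite -!cat_cons !perm_cat2r ps ps'; split=> //; split=> //.
  by rewrite -!maxnA [maxn h _]maxnC.
Qed.

Lemma perm_cat_cons (x : nat) t s s' :
  perm_eq s (x :: s') -> perm_eq (t ++ s) (x :: t ++ s').
Proof. by move=> ps; rewrite perm_sym -cat1s perm_catCA perm_cat2l perm_sym. Qed.

Lemma step_effect_catl t h l s g s' g' :
  step_effect l s g s' g' ->
  step_effect l (t ++ s) (maxn h g) (t ++ s') (maxn h g').
Proof.
case: l => [M N|K N|] /=.
- case=> a [-> [ps ->]]; exists a; split=> //; split=> //.
  exact: perm_cat_cons.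
- case=> XE [XR [XI [XG [-> [ps ->]]]]]; exists XE, XR, XI, XG.
  by split=> //; split; [exact: perm_cat_cons | rewrite maxnA].
- case=> k [t' [ps [ps' ->]]]; exists k, (t ++ t').
  by split; [|split]; [exact: perm_cat_cons.. | rewrite maxnA].
Qed.

Lemma step_effect_com M K N sP gP sP' gP' sQ gQ sQ' gQ' :
  step_effect (LOut M N) sP gP sP' gP' ->
  step_effect (LIn K N) sQ gQ sQ' gQ' ->
  step_effect (Tau E) (sP ++ sQ) (maxn gP gQ) (sP' ++ sQ') (maxn gP' gQ').
Proof.
case=> a [-> [psP ->]] [XE [XR [XI [XG [[ea] [psQ ->]]]]]]; subst a.
exists XG, (sP' ++ sQ); split; first by rewrite -cat_cons perm_cat2r.
by split; [exact: perm_cat_cons | rewrite maxnA].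
Qed.

Lemma step_effect_tau_catC s g s' g' t h t' h' :
  step_effect (Tau E) (s ++ t) (maxn g h) (s' ++ t') (maxn g' h') ->
  step_effect (Tau E) (t ++ s) (maxn h g) (t' ++ s') (maxn h' g').
Proof.
case=> k [u [ps [ps' e]]]; exists k, u.
by rewrite perm_catC ps perm_catC ps' (maxnC h') e (maxnC h).
Qed.

Lemma nth_singleton_eq {T : Type} {i} {x y : T} :
  i < 1 -> nth y [:: x] i = y -> x = y.
Proof. by case: i. Qed.

(* In the [Case] and [Rep] cases the summaries of the process before and
   after unfolding coincide by computation, so the induction hypothesis
   closes the goal as it stands. *)
Lemma trans_step_effect Psi P l P' :
  trans Psi P l P' -> wf_proc P ->
  step_effect l (pending P) (aG (frame P)) (pending P') (aG (frame P')) /\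
  wf_proc P'.
Proof.
elim=> {Psi P l P'}.
- by move=> Psi M K N P _ /= [[a ->] ->]; split=> //; exists a.
- move=> Psi M K f XE XR XI XG _ /= [e ->].
  split; first by exists XE, XR, XI, XG; rewrite max0n.
  by split=> //; split=> //; eexists.
- move=> Psi cs phi P a P' [i [lt1 nthP]] _ IH _ [e [ecs]]; subst cs.
  move: nthP => /(nth_singleton_eq lt1) [_ eP]; subst P.
  by apply: IH; exists e.
- move=> Psi P Q a P' _ IH /= [wP wQ]; have [eff wP'] := IH wP.
  by rewrite !aG_compA; split=> //; apply: step_effect_catr.
- move=> Psi P Q a Q' _ IH /= [wP wQ]; have [eff wQ'] := IH wQ.
  by rewrite !aG_compA; split=> //; apply: step_effect_catl.
- by move=> Psi P a P' _ IH /= [e eP]; subst P; apply: IH; split=> //; exists e.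
- move=> Psi P Q M K N P' Q' _ IHP _ IHQ _ /= [wP wQ].
  have [effP wP'] := IHP wP; have [effQ wQ'] := IHQ wQ.
  by rewrite !aG_compA; split=> //; apply: step_effect_com effP effQ.
- move=> Psi P Q M K N P' Q' _ IHP _ IHQ _ /= [wP wQ].
  have [effP wP'] := IHP wP; have [effQ wQ'] := IHQ wQ.
  rewrite !aG_compA; split=> //; apply: step_effect_tau_catC.
  exact: step_effect_com effQ effP.
Qed.

Definition at_generation (P : proc E) (k : nat) : Prop :=
  [/\ wf_proc P, pending P = [:: k] & aG (frame P) = k].

Lemma at_generation_tau Psi P P' k :
  at_generation P k -> trans Psi P (Tau E) P' -> at_generation P' k.+1.
Proof.
case=> wP pP gP /trans_step_effect/(_ wP) [[j [t [ps [ps' eg]]]] wP'].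
move: ps; rewrite pP perm_sym => /perm_small_eq-/(_ isT) [ej et].
subst j t; split=> //; first exact: perm_small_eq ps'.
by rewrite eg gP; apply/maxn_idPr.
Qed.

Lemma replicas_idle (s : seq E) :
  [/\ wf_proc (bigpar (map (P_e D) s)), pending (bigpar (map (P_e D) s)) = [::]
     & aG (frame (bigpar (map (P_e D) s))) = 0].
Proof.
elim: s => [|e s IH] //; case: s IH => [|e' s] [wQ pQ gQ].
  by split=> //; exists e.
by split=> //=; [split=> //; exists e | rewrite aG_compA -/frame gQ].
Qed.

Lemma at_generation_dcrpsi : at_generation (dcrpsi D) 0.
Proof.
have [wQ pQ gQ] := replicas_idle (enum E).
split=> /=; rewrite ?pQ ?aG_compA ?gQ //.
by split=> //; split=> //; split=> //; eexists.
Qed.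

End GenerationCount.

Theorem mainTheorem8 (E : finType) (D : dcr_graph E) (n : nat)
  (P : nat -> proc E) :
  P 0 = dcrpsi D ->
  (forall i, i < n -> trans (unitA E) (P i) (Tau E) (P i.+1)) ->
  aG (frame (P n)) = n.
Proof.
move=> P0 run.
suff /(_ n (leqnn n)) [] : forall k, k <= n -> at_generation D (P k) k by [].
elim=> [_|k IH lt_kn]; first by rewrite P0; exact: at_generation_dcrpsi.
exact: at_generation_tau (IH (ltnW lt_kn)) (run k lt_kn).
Qed.
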